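(* In the algebra $\mathcal O_q$ defined in the context, with $B_\delta=q^{-2}\mathcal W_1\mathcal W_0-\mathcal W_0\mathcal W_1$, the following hold for all $k\in\mathbb N$: (i) $[\tilde{\mathcal G}_{k+1},\mathcal W_0]_q=(q-q^{-1})\mathcal W_0\tilde{\mathcal G}_{k+1}-q^2[B_\delta,\mathcal W_{-k}]$; (ii) $[\mathcal W_1,\tilde{\mathcal G}_{k+1}]_q=(q-q^{-1})\mathcal W_1\tilde{\mathcal G}_{k+1}+[B_\delta,\mathcal W_{k+1}]$.
   Context: All algebras are associative and unital over a field $\mathbb F$; $q\in\mathbb F$ is nonzero and not a root of unity. For elements $X,Y$ of an algebra, $[X,Y]=XY-YX$ and $[X,Y]_q=qXY-q^{-1}YX$. Let $\rho=-(q^2-q^{-2})^2$. The algebra $\mathcal O_q$ is defined by generators $\mathcal W_{-k},\mathcal W_{k+1},\mathcal G_{k+1},\tilde{\mathcal G}_{k+1}$ ($k\in\mathbb N$) and the following relations for all $k,\ell\in\mathbb N$: $[\mathcal W_0,\mathcal W_{k+1}]=[\mathcal W_{-k},\mathcal W_1]=(\tilde{\mathcal G}_{k+1}-\mathcal G_{k+1})/(q+q^{-1})$; $[\mathcal W_0,\mathcal G_{k+1}]_q=[\tilde{\mathcal G}_{k+1},\mathcal W_0]_q=\rho\mathcal W_{-k-1}-\rho\mathcal W_{k+1}$; $[\mathcal G_{k+1},\mathcal W_1]_q=[\mathcal W_1,\tilde{\mathcal G}_{k+1}]_q=\rho\mathcal W_{k+2}-\rho\mathcal W_{-k}$; $[\mathcal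 W_{-k},\mathcal W_{-\ell}]=0$, $[\mathcal W_{k+1},\mathcal W_{\ell+1}]=0$; $[\mathcal W_{-k},\mathcal W_{\ell+1}]+[\mathcal W_{k+1},\mathcal W_{-\ell}]=0$; $[\mathcal W_{-k},\mathcal G_{\ell+1}]+[\mathcal G_{k+1},\mathcal W_{-\ell}]=0$; $[\mathcal W_{-k},\tilde{\mathcal G}_{\ell+1}]+[\tilde{\mathcal G}_{k+1},\mathcal W_{-\ell}]=0$; $[\mathcal W_{k+1},\mathcal G_{\ell+1}]+[\mathcal G_{k+1},\mathcal W_{\ell+1}]=0$; $[\mathcal W_{k+1},\tilde{\mathcal G}_{\ell+1}]+[\tilde{\mathcal G}_{k+1},\mathcal W_{\ell+1}]=0$; $[\mathcal G_{k+1},\mathcal G_{\ell+1}]=0$, $[\tilde{\mathcal G}_{k+1},\tilde{\mathcal G}_{\ell+1}]=0$; $[\tilde{\mathcal G}_{k+1},\mathcal G_{\ell+1}]+[\mathcal G_{k+1},\tilde{\mathcal G}_{\ell+1}]=0$. *)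

From HB Require Import structures.
From mathcomp Require Import all_boot all_order all_algebra.
Set Implicit Arguments. Unset Strict Implicit. Unset Printing Implicit Defensive.
Import GRing.Theory.
Local Open Scope ring_scope.

Definition comm (A : pzRingType) (X Y : A) : A := X * Y - Y * X.

Definition qcomm (F : fieldType) (A : algType F) (q : F) (X Y : A) : A :=
  q *: (X * Y) - q^-1 *: (Y * X).

Definition rho_of (F : fieldType) (q : F) : F := - (q ^+ 2 - q ^- 2) ^+ 2.

Definition not_root_of_unity (F : fieldType) (q : F) : Prop :=
  forall n : nat, (0 < n)%N -> q ^+ n != 1.

(* Defining relations of O_q for a family of elements of an F-algebra A.
   Indexing convention (k : nat):
     Wm k = W_{-k},  Wp k = W_{k+1},  G k = G_{k+1},  Gt k = ~G_{k+1}. *)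
Definition Oq_rels (F : fieldType) (A : algType F) (q : F)
  (Wm Wp G Gt : nat -> A) : Prop :=
  let rho := rho_of q in
  forall k l : nat,
  (comm (Wm 0%N) (Wp k) = (q + q^-1)^-1 *: (Gt k - G k)
  /\ comm (Wm k) (Wp 0%N) = (q + q^-1)^-1 *: (Gt k - G k)
  /\ qcomm q (Wm 0%N) (G k) = rho *: (Wm k.+1 - Wp k)
  /\ qcomm q (Gt k) (Wm 0%N) = rho *: (Wm k.+1 - Wp k)
  /\ qcomm q (G k) (Wp 0%N) = rho *: (Wp k.+1 - Wm k)
  /\ qcomm q (Wp 0%N) (Gt k) = rho *: (Wp k.+1 - Wm k)
  /\ comm (Wm k) (Wm l) = 0
  /\ comm (Wp k) (Wp l) = 0
  /\ comm (Wm k) (Wp l) + comm (Wp k) (Wm l) = 0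
  /\ comm (Wm k) (G l) + comm (G k) (Wm l) = 0
  /\ comm (Wm k) (Gt l) + comm (Gt k) (Wm l) = 0
  /\ comm (Wp k) (G l) + comm (G k) (Wp l) = 0
  /\ comm (Wp k) (Gt l) + comm (Gt k) (Wp l) = 0
  /\ comm (G k) (G l) = 0
  /\ comm (Gt k) (Gt l) = 0 /\
      comm (Gt k) (G l) + comm (G k) (Gt l) = 0).

(* Expanding [X,Y]_q = (q - q^-1) Y X + q [X,Y] = (q - q^-1) X Y + q^-1 [X,Y]
   reduces the two identities to q [B_delta, W_{-k}] = [W_0, ~G_{k+1}] and
   q [B_delta, W_{k+1}] = [W_1, ~G_{k+1}].  For the first, the Leibniz rule
   and [W_0, W_{-k}] = 0 give q [B_delta, W_{-k}] = [W_0, [W_{-k}, W_1]]_q;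
   inserting [W_{-k}, W_1] = (~G_{k+1} - G_{k+1}) / (q + q^-1) and
   [W_0, G_{k+1}]_q = [~G_{k+1}, W_0]_q leaves
   ([W_0, ~G_{k+1}]_q - [~G_{k+1}, W_0]_q) / (q + q^-1) = [W_0, ~G_{k+1}].  Here q + q^-1 <> 0 because q^4 <> 1. *)
From mathcomp Require Import all_boot all_order all_algebra.
Import GRing.Theory.
Local Open Scope ring_scope.
Set Implicit Arguments. Unset Strict Implicit.

Definition bdelta (F : fieldType) (A : algType F) (q : F) (W0 W1 : A) : A :=
  q ^- 2 *: (W1 * W0) - W0 * W1.

Section Commutators.
Variables (F : fieldType) (A : algType F) (q : F).
Implicit Types (X Y Z : A) (a : F).

Lemma commN X Y : comm Y X = - comm X Y.
Proof. by rewrite /comm opprB. Qed.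

Lemma commBl X Y Z : comm (X - Y) Z = comm X Z - comm Y Z.
Proof. by rewrite /comm mulrBl mulrBr !opprD !opprK addrACA. Qed.

Lemma commZl a X Y : comm (a *: X) Y = a *: comm X Y.
Proof. by rewrite /comm -scalerAl -scalerAr scalerBr. Qed.

Lemma commMl X Y Z : comm (X * Y) Z = X * comm Y Z + comm X Z * Y.
Proof. by rewrite /comm mulrBr mulrBl !mulrA addrA subrK. Qed.

Lemma qcommBl X Y Z : qcomm q (X - Y) Z = qcomm q X Z - qcomm q Y Z.
Proof. by rewrite /qcomm mulrBl mulrBr !scalerBr !opprD !opprK addrACA. Qed.

Lemma qcommBr X Y Z : qcomm q X (Y - Z) = qcomm q X Y - qcomm q X Z.
Proof. by rewrite /qcomm mulrBl mulrBr !scalerBr !opprD !opprK addrACA. Qed.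

Lemma qcommZl a X Y : qcomm q (a *: X) Y = a *: qcomm q X Y.
Proof.
by rewrite /qcomm -scalerAl -scalerAr !scalerA mulrC [q^-1 * a]mulrC -!scalerA
  scalerBr.
Qed.

Lemma qcommZr a X Y : qcomm q X (a *: Y) = a *: qcomm q X Y.
Proof.
by rewrite /qcomm -scalerAl -scalerAr !scalerA mulrC [q^-1 * a]mulrC -!scalerA
  scalerBr.
Qed.

Lemma qcommEl X Y : qcomm q X Y = (q - q^-1) *: (X * Y) + q^-1 *: comm X Y.
Proof. by rewrite /qcomm /comm scalerBr scalerBl addrA subrK. Qed.

Lemma qcommEr X Y : qcomm q X Y = (q - q^-1) *: (Y * X) + q *: comm X Y.
Proof. by rewrite /qcomm /comm scalerBr scalerBl [RHS]addrC addrA subrK. Qed.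

Lemma qcomm_subC X Y : qcomm q X Y - qcomm q Y X = (q + q^-1) *: comm X Y.
Proof.
by rewrite /qcomm /comm scalerBr !scalerDl !opprD !opprK addrACA [RHS]addrACA
  [X in _ + X = _]addrC.
Qed.
End Commutators.

Section Bdelta.
Variables (F : fieldType) (A : algType F) (q : F) (W0 W1 : A).
Hypothesis q_neq0 : q != 0.

Let mul_q_qN2 : q * q ^- 2 = q^-1.
Proof. by rewrite -exprVn expr2 mulrA mulfV // mul1r. Qed.

Lemma comm_bdelta_l X :
  comm W0 X = 0 -> q *: comm (bdelta q W0 W1) X = qcomm q W0 (comm X W1).
Proof.
move=> W0X; rewrite /bdelta commBl commZl !commMl W0X mulr0 mul0r add0r addr0.
by rewrite (commN X) /qcomm mulrN mulNr !scalerN opprK scalerDr scalerN scalerA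
  mul_q_qN2 addrC.
Qed.

Lemma comm_bdelta_r Y :
  comm W1 Y = 0 -> q *: comm (bdelta q W0 W1) Y = - qcomm q (comm W0 Y) W1.
Proof.
move=> W1Y; rewrite /bdelta commBl commZl !commMl W1Y mulr0 mul0r add0r addr0.
by rewrite /qcomm scalerBr scalerA mul_q_qN2 opprB.
Qed.
End Bdelta.

Section QCommSub.
Variables (F : fieldType) (A : algType F) (q : F).
Hypothesis qDqV_neq0 : q + q^-1 != 0.
Implicit Types X g t : A.

Lemma qcomm_normalized_subr X g t : qcomm q X g = qcomm q t X ->
  qcomm q X ((q + q^-1)^-1 *: (t - g)) = comm X t.
Proof.
by move=> e; rewrite qcommZr qcommBr e qcomm_subC scalerA mulVf // scale1r.
Qed.

Lemma qcomm_normalized_subl X g t : qcomm q g X = qcomm q X t ->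
  qcomm q ((q + q^-1)^-1 *: (t - g)) X = - comm X t.
Proof.
move=> e; rewrite qcommZl qcommBl e qcomm_subC scalerA mulVf // scale1r.
exact: commN.
Qed.
End QCommSub.

Lemma addr_invr_neq0 (F : fieldType) (q : F) :
  q != 0 -> not_root_of_unity q -> q + q^-1 != 0.
Proof.
move=> q0 nru; apply: contraTneq (nru 4%N isT) => qDqV0.
have sq_q : q ^+ 2 = -1.
  apply/eqP; rewrite -subr_eq0 opprK expr2 -(mulfV q0) -mulrDr qDqV0.
  by rewrite mulr0.
by rewrite -[4%N]/(2 * 2)%N exprM sq_q sqrrN expr1n eqxx.
Qed.

Theorem lemma11p4 (F : fieldType) (q : F) (A : algType F)
  (Wm Wp G Gt : nat -> A) :
  q != 0 -> not_root_of_unity q ->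
  Oq_rels q Wm Wp G Gt ->
  let Bd := q ^- 2 *: (Wp 0%N * Wm 0%N) - Wm 0%N * Wp 0%N in
  forall k : nat,
    qcomm q (Gt k) (Wm 0%N)
      = (q - q^-1) *: (Wm 0%N * Gt k) - q ^+ 2 *: comm Bd (Wm k)
 /\ qcomm q (Wp 0%N) (Gt k)
      = (q - q^-1) *: (Wp 0%N * Gt k) + comm Bd (Wp k).
Proof.
move=> q0 nru rels Bd k.
have qDqV0 := addr_invr_neq0 q0 nru.
have [W0_Wpk [Wmk_W1 [W0_G [Gt_W0 [G_W1 [W1_Gt _]]]]]] := rels k k.
have [_ [_ [_ [_ [_ [_ [W0_Wmk [W1_Wpk _]]]]]]]] := rels 0%N k.
have BdX : q *: comm Bd (Wm k) = comm (Wm 0%N) (Gt k).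
  by rewrite comm_bdelta_l // Wmk_W1 qcomm_normalized_subr // W0_G Gt_W0.
have BdY : q *: comm Bd (Wp k) = comm (Wp 0%N) (Gt k).
  by rewrite comm_bdelta_r // W0_Wpk qcomm_normalized_subl ?opprK // G_W1 W1_Gt.
split.
- by rewrite qcommEr expr2 -scalerA BdX commN scalerN.
- by rewrite qcommEl -BdY scalerA mulVf // scale1r.
Qed.
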